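(* Let $n\ge2$, let $c=(c_{i,j})$ be an $n\times(n+1)$ matrix with entries in $\{0,1\}$, $\sigma_1,\ldots,\sigma_n>0$, $\gamma_1,\ldots,\gamma_{n+1}>0$. Let $\mathbf{X}=(X_1,\ldots,X_n)'$ have decumulative distribution function $\mathbf{P}[X_1>x_1,\ldots,X_n>x_n]=\prod_{j=1}^{n+1}(1+\sum_{i=1}^nc_{i,j}x_i/\sigma_i)^{-\gamma_j}$ for $(x_1,\ldots,x_n)'\in(0,\infty)^n$. For $1\le k\ne l\le n$ let $\gamma_{c,(k,l)}=\gamma_{c,(l,k)}=\sum_jc_{k,j}c_{l,j}\gamma_j$ (assumed $>0$), $\gamma_{c,k}=\sum_jc_{k,j}(1-c_{l,j})\gamma_j$ and $m(x_l)=\frac{\sigma_k}{\gamma_{c,(k,l)}}(1+x_l/\sigma_l)$. Then for $x_k,x_l>0$, \[ \mathbf{P}[X_k>x_k\mid X_l>x_l]=\left(1+\frac{x_k}{\sigma_k}\right)^{-\gamma_{c,k}}\left(1+\frac{x_k}{\gamma_{c,(k,l)}m(x_l)}\right)^{-\gamma_{c,(l,k)}}. \] *)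

From HB Require Import structures.
From mathcomp Require Import all_boot all_order all_algebra.
From mathcomp Require Import all_classical all_reals all_analysis.
Set Implicit Arguments. Unset Strict Implicit. Unset Printing Implicit Defensive.
Import Order.TTheory GRing.Theory Num.Theory.
Local Open Scope classical_set_scope.
Local Open Scope ring_scope.

Definition cond_prob d (T : measurableType d) (R : realType)
  (P : probability T R) (A B : set T) : R :=
  fine (P (A `&` B)) / fine (P B).

Definition gamma_c2 (R : realType) (n : nat) (c : 'M[R]_(n, n.+1))
  (gamma : 'I_n.+1 -> R) (k l : 'I_n) : R :=
  \sum_(j < n.+1) c k j * c l j * gamma j.

Definition gamma_c1 (R : realType) (n : nat) (c : 'M[R]_(n, n.+1))
  (gamma : 'I_n.+1 -> R) (k l : 'I_n) : R :=
  \sum_(j < n.+1) c k j * (1 - c l j) * gamma j.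

Definition m_fun (R : realType) (n : nat) (c : 'M[R]_(n, n.+1))
  (sigma : 'I_n -> R) (gamma : 'I_n.+1 -> R) (k l : 'I_n) (xl : R) : R :=
  sigma k / gamma_c2 c gamma k l * (1 + xl / sigma l).

From HB Require Import structures.
From mathcomp Require Import all_boot all_order all_algebra.
From mathcomp Require Import all_classical all_reals all_analysis.
From mathcomp Require Import ring.
Import Order.TTheory GRing.Theory Num.Theory.
Local Open Scope classical_set_scope.
Local Open Scope ring_scope.
Import numFieldNormedType.Exports.
Set Implicit Arguments. Unset Strict Implicit. Unset Printing Implicit Defensive.

(* Let the thresholds of the coordinates other than k and l tend to 0 from
   above.  The joint survival probabilities converge to the closed formula with
   those thresholds set to 0, and the event that every coordinate exceeds 1/(m+1)
   has, by the same formula, probability tending to 1; together they squeeze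
   P[X_k > x_k, X_l > x_l] and P[X_l > x_l] to the formula evaluated at the
   corresponding boundary points.  The conditional probability is then a ratio of
   two products over j, computed factor by factor according to the four possible
   values of (c_{k,j}, c_{l,j}). *)

Lemma continuous_powR (R : realType) (p a : R) : 0 < a ->
  {for a, continuous (@powR R ^~ p)}.
Proof.
move=> a0; apply: differentiable_continuous; apply/derivable1_diffP.
by apply: derivable_powR; rewrite in_itv /= andbT.
Qed.

Lemma powR_sum (R : realType) (I : Type) (r : seq I) (a : R) (e : I -> R) :
  0 < a -> a `^ (\sum_(j <- r) e j) = \prod_(j <- r) a `^ e j.
Proof.
move=> a0; elim: r => [|x r IH]; first by rewrite !big_nil powRr0.
by rewrite !big_cons powRD ?IH // (gt_eqF a0) implybT.
Qed.

Lemma pareto_factor_ratio (R : realType) (a b ck cl g : R) :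
  0 <= a -> 0 <= b -> (ck = 0 \/ ck = 1) -> (cl = 0 \/ cl = 1) ->
  (1 + (ck * a + cl * b)) `^ (- g) / (1 + cl * b) `^ (- g) =
  (1 + a) `^ (- (ck * (1 - cl) * g)) * (1 + a / (1 + b)) `^ (- (cl * ck * g)).
Proof.
move=> a_ge0 b_ge0 ck01 cl01.
have b1_gt0 : 0 < 1 + b by rewrite ltr_wpDr.
have b1_powR_neq0 : (1 + b) `^ (- g) != 0 by rewrite gt_eqF ?powR_gt0.
case: ck01 => ->; case: cl01 => ->;
  rewrite ?(mul0r, mul1r, mulr0, subr0, subrr, add0r, addr0, oppr0) //;
  rewrite ?(powRr0, powR1, invr1, mulr1) //.
  by rewrite divff.
have -> : 1 + (a + b) = (1 + b) * (1 + a / (1 + b)).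
  by field; rewrite gt_eqF.
by rewrite powRM ?addr_ge0 ?divr_ge0 ?(ltW b1_gt0) // mulrAC divff ?mul1r.
Qed.

Section pareto_survival.
Context {R : realType} {n : nat}.
Variable c : 'M[R]_(n, n.+1).
Variables (sigma : 'I_n -> R) (gamma : 'I_n.+1 -> R).
Hypothesis c_ge0 : forall i j, 0 <= c i j.
Hypothesis sigma_gt0 : forall i, 0 < sigma i.

Definition pareto_survival (x : 'I_n -> R) : R :=
  \prod_(j < n.+1) (1 + \sum_(i < n) c i j * x i / sigma i) `^ (- gamma j).

Lemma pareto_survival0 : pareto_survival (fun=> 0) = 1.
Proof.
rewrite /pareto_survival big1 // => j _.
by rewrite big1 ?addr0 ?powR1 // => i _; rewrite mulr0 mul0r.
Qed.

Lemma pareto_survival_cvg (T : Type) (F : set_system T) {FF : Filter F}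
    (u : T -> 'I_n -> R) (y : 'I_n -> R) :
  (forall i, 0 <= y i) -> (forall i, u ^~ i @ F --> y i) ->
  pareto_survival (u t) @[t --> F] --> pareto_survival y.
Proof.
move=> y_ge0 uy; rewrite /pareto_survival.
apply: (cvg_big mul_continuous) => // j _.
have base_gt0 : 0 < 1 + \sum_(i < n) c i j * y i / sigma i.
  by rewrite ltr_wpDr // sumr_ge0 // => i _; rewrite divr_ge0 ?mulr_ge0 // ltW.
have base_cvg : (1 + \sum_(i < n) c i j * u t i / sigma i) @[t --> F] -->
    1 + \sum_(i < n) c i j * y i / sigma i.
  apply: cvgD; first exact: cvg_cst.
  apply: (cvg_big add_continuous) => // i _.
  by apply: cvgM; [apply: cvgM; [exact: cvg_cst|]|exact: cvg_cst].
exact: (continuous_cvg _ (continuous_powR (p := - gamma j) base_gt0) base_cvg).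
Qed.

Lemma pareto_survival_ratio k l xk xl :
  (forall i j, c i j = 0 \/ c i j = 1) -> k != l ->
  0 < gamma_c2 c gamma k l -> 0 < xk -> 0 < xl ->
  pareto_survival (fun i => if i == k then xk else if i == l then xl else 0) /
  pareto_survival (fun i => if i == l then xl else 0) =
  (1 + xk / sigma k) `^ (- gamma_c1 c gamma k l) *
  (1 + xk / (gamma_c2 c gamma k l * m_fun c sigma gamma k l xl))
    `^ (- gamma_c2 c gamma l k).
Proof.
move=> c01 kl gkl_gt0 xk_gt0 xl_gt0.
have sum_l j : \sum_(i < n) c i j * (if i == l then xl else 0) / sigma i =
    c l j * (xl / sigma l).
  rewrite (bigD1 l) //= eqxx mulrA big1 ?addr0 // => i /negbTE ->.
  by rewrite mulr0 mul0r.
have sum_kl j :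
    \sum_(i < n) c i j * (if i == k then xk else if i == l then xl else 0) / sigma i
    = c k j * (xk / sigma k) + c l j * (xl / sigma l).
  rewrite (bigD1 k) //= eqxx mulrA -sum_l; congr (_ + _).
  rewrite [RHS](bigD1 k) //= (negbTE kl) mulr0 mul0r add0r.
  by apply: eq_bigr => i /negbTE ->.
have xl1_gt0 : 0 < 1 + xl / sigma l by rewrite ltr_wpDr ?divr_ge0 ?ltW.
have -> : xk / (gamma_c2 c gamma k l * m_fun c sigma gamma k l xl) =
    xk / sigma k / (1 + xl / sigma l).
  by rewrite /m_fun mulrA mulrCA mulfV ?gt_eqF // mulr1 invfM mulrA.
rewrite /pareto_survival /gamma_c1 /gamma_c2 -!sumrN.
rewrite !powR_sum ?ltr_wpDr ?divr_ge0 ?ltW // -prodf_div -big_split /=.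
apply: eq_bigr => j _; rewrite sum_kl sum_l.
by apply: pareto_factor_ratio; rewrite ?divr_ge0 ?ltW.
Qed.

End pareto_survival.

Section probability_squeeze.
Variables (d : measure_display) (T : measurableType d) (R : realType).
Variable P : probability T R.

Lemma fine_probability_squeeze (E : set T) (A C : nat -> set T) (L : R) :
  measurable E -> (forall m, measurable (A m)) -> (forall m, measurable (C m)) ->
  (forall m, A m `<=` E) -> (forall m, E `&` C m `<=` A m) ->
  fine (P (A m)) @[m --> \oo] --> L -> fine (P (C m)) @[m --> \oo] --> (1 : R) ->
  fine (P E) = L.
Proof.
move=> mE mA mC AE ECA PA PC.
have finP S : measurable S -> P S = (fine (P S))%:E.
  by move=> mS; rewrite fineK // fin_num_measure.
have lower m : fine (P (A m)) <= fine (P E).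
  by rewrite -lee_fin -!finP // le_measure // inE.
have upper m : fine (P E) <= fine (P (A m)) + (1 - fine (P (C m))).
  rewrite -lee_fin EFinD EFinB -!finP // -probability_setC //.
  apply: le_trans (measureU2 _ _ _) => //; last exact: measurableC.
  apply: le_measure; rewrite ?inE //; first exact/measurableU/measurableC.
  by move=> w Ew; have [Cw|nCw] := pselect (C m w); [left; exact: ECA|right].
have PAC : fine (P (A m)) + (1 - fine (P (C m))) @[m --> \oo] --> L + (1 - 1).
  by apply: cvgD => //; apply: cvgB => //; exact: cvg_cst.
rewrite subrr addr0 in PAC.
have cst_cvg : (fun=> fine (P E)) @ \oo --> L.
  by apply: squeeze_cvgr PA PAC; apply: nearW => m; rewrite lower upper.
exact: (cvg_unique _ (cvg_cst _) cst_cvg).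
Qed.

End probability_squeeze.

Section exceedance.
Variables (d : measure_display) (T : measurableType d) (R : realType).
Variables (P : probability T R) (n : nat) (X : 'I_n -> {RV P >-> R}).

(* Coordinates with a nonpositive threshold are unconstrained: marginal events
   are exceedance events of vectors with zero entries. *)
Definition exceedance (y : 'I_n -> R) : set T :=
  \bigcap_(i in [set i | 0 < y i]) [set w | y i < X i w].

Lemma measurable_exceedance y : measurable (exceedance y).
Proof.
apply: fin_bigcap_measurable => [|i _]; first exact: finite_finset.
have -> : [set w | y i < X i w] = X i @^-1` `]y i, +oo[.
  by apply/seteqP; split => w /=; rewrite in_itv /= andbT.
exact: measurable_funPTI.
Qed.

Lemma exceedance0 : exceedance (fun=> 0) = setT.
Proof.
rewrite /exceedance -(bigcap_set0 (fun i => [set w | 0 < X i w])).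
by congr bigcap; apply/seteqP; split => i /=; rewrite ltxx.
Qed.

Lemma exceedance_gt0 x : (forall i, 0 < x i) ->
  exceedance x = \bigcap_(i : 'I_n) [set w | x i < X i w].
Proof. by move=> x_gt0; congr bigcap; apply/seteqP; split => i // _; exact: x_gt0. Qed.

Lemma exceedance_update y k a : 0 < a -> ~ 0 < y k ->
  exceedance (fun i => if i == k then a else y i) =
  [set w | a < X k w] `&` exceedance y.
Proof.
move=> a_gt0 yk; rewrite /exceedance.
have -> : [set i | 0 < (if i == k then a else y i)] = k |` [set i | 0 < y i].
  apply/seteqP; split => i /=; case: eqVneq => [->|ik]; [by left|by right|by []|].
  by case=> [/eqP|]; rewrite ?(negbTE ik).
rewrite bigcap_setU1 eqxx; congr (_ `&` _); apply: eq_bigcapr => i /= yi.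
by case: eqVneq yi => [->|].
Qed.

Variables (c : 'M[R]_(n, n.+1)) (sigma : 'I_n -> R) (gamma : 'I_n.+1 -> R).
Hypothesis c_ge0 : forall i j, 0 <= c i j.
Hypothesis sigma_gt0 : forall i, 0 < sigma i.
Hypothesis X_survival : forall x : 'I_n -> R, (forall i, 0 < x i) ->
  P (\bigcap_(i : 'I_n) [set w | x i < X i w]) =
  (pareto_survival c sigma gamma x)%:E.

Lemma fine_exceedance y : (forall i, 0 <= y i) ->
  fine (P (exceedance y)) = pareto_survival c sigma gamma y.
Proof.
move=> y_ge0.
have P_exceedance x : (forall i, 0 < x i) ->
    fine (P (exceedance x)) = pareto_survival c sigma gamma x.
  by move=> x_gt0; rewrite exceedance_gt0 // X_survival.
pose approx m i := if 0 < y i then y i else harmonic m.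
have approx_gt0 m i : 0 < approx m i.
  by rewrite /approx; case: ifP => // _; exact: harmonic_gt0.
apply: (@fine_probability_squeeze _ _ _ _ _ (fun m => exceedance (approx m))
    (fun m => exceedance (fun=> harmonic m))) => [|m|m||||];
  try exact: measurable_exceedance.
- move=> m w approx_w i /= yi.
  by have := approx_w i (approx_gt0 m i); rewrite /approx yi.
- move=> m w [y_w harmonic_w] i _ /=; rewrite /approx; case: ifP => yi.
    exact: y_w.
  exact: harmonic_w (harmonic_gt0 m).
- under eq_fun do rewrite P_exceedance //.
  apply: pareto_survival_cvg => // i; rewrite /approx; case: (boolP (0 < y i)).
    by move=> _; exact: cvg_cst.
  by rewrite lt_neqAle y_ge0 andbT negbK => /eqP <-; exact: cvg_harmonic.
- under eq_fun do rewrite P_exceedance ?harmonic_gt0 //.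
  rewrite -(pareto_survival0 c sigma gamma).
  by apply: pareto_survival_cvg => // i; exact: cvg_harmonic.
Qed.

End exceedance.

Theorem proposition4p4 (d : measure_display) (T : measurableType d)
  (R : realType) (P : probability T R) (n : nat) (hn : (2 <= n)%N)
  (c : 'M[R]_(n, n.+1)) (hc : forall i j, c i j = 0 \/ c i j = 1)
  (sigma : 'I_n -> R) (hsigma : forall i, 0 < sigma i)
  (gamma : 'I_n.+1 -> R) (hgamma : forall j, 0 < gamma j)
  (X : 'I_n -> {RV P >-> R})
  (hX : forall x : 'I_n -> R, (forall i, 0 < x i) ->
     P (\bigcap_(i : 'I_n) [set w | x i < X i w]) =
     (\prod_(j < n.+1) (1 + \sum_(i < n) c i j * x i / sigma i) `^ (- gamma j))%:E)
  (k l : 'I_n) (hkl : k != l) (hgkl : 0 < gamma_c2 c gamma k l)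
  (xk xl : R) (hxk : 0 < xk) (hxl : 0 < xl) :
  cond_prob P [set w | xk < X k w] [set w | xl < X l w] =
  (1 + xk / sigma k) `^ (- gamma_c1 c gamma k l) *
  (1 + xk / (gamma_c2 c gamma k l * m_fun c sigma gamma k l xl))
    `^ (- gamma_c2 c gamma l k).
Proof.
have c_ge0 i j : 0 <= c i j by case: (hc i j) => ->.
pose yl i := if i == l then xl else 0.
pose ykl i := if i == k then xk else yl i.
have yl_ge0 i : 0 <= yl i by rewrite /yl; case: eqP => // _; exact: ltW.
have ykl_ge0 i : 0 <= ykl i by rewrite /ykl; case: eqP => // _; exact: ltW.
have El : [set w | xl < X l w] = exceedance X yl.
  by rewrite exceedance_update ?ltxx // exceedance0 setIT.
have Ekl : [set w | xk < X k w] `&` [set w | xl < X l w] = exceedance X ykl.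
  by rewrite [RHS]exceedance_update -?El // /yl (negbTE hkl) ltxx.
rewrite /cond_prob Ekl El !(fine_exceedance c_ge0 hsigma hX) //.
exact: pareto_survival_ratio.
Qed.
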